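(* Let $X$ be a Hausdorff hereditarily disconnected space. If $\mathcal{C}\subset\mathcal{K}(X)$ is connected and there exists $T\in\mathcal{C}$ that is scattered, then $|\mathcal{C}|=1$.
   Context: $\mathcal{K}(X)$ is the set of nonempty compact subsets of $X$ with the Vietoris topology (generated by $U^+=\{A: A\subset U\}$ and $U^-=\{A: A\cap U\neq\emptyset\}$ for $U$ open in $X$). A space is hereditarily disconnected if every nonempty connected subset is a singleton. A space is scattered if every nonempty subset has an isolated point (in its relative topology). *)

From HB Require Import structures.
From mathcomp Require Import all_boot all_order all_algebra.
From mathcomp Require Import all_classical all_reals all_analysis.
Set Implicit Arguments. Unset Strict Implicit. Unset Printing Implicit Defensive.
Local Open Scope classical_set_scope.

Definition hereditarily_disconnected (X : topologicalType) : Prop :=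
  forall A : set X, A !=set0 -> connected A -> exists x : X, A = [set x].

Definition isolated_in (X : topologicalType) (S : set X) (x : X) : Prop :=
  S x /\ exists U : set X, open U /\ U `&` S = [set x].

Definition scattered (X : topologicalType) (S : set X) : Prop :=
  forall A : set X, A `<=` S -> A !=set0 -> exists x : X, isolated_in A x.

Definition hyperspace (X : topologicalType) : Type :=
  {A : set X | A !=set0 /\ compact A}.

HB.instance Definition _ (X : topologicalType) :=
  gen_eqMixin (hyperspace X).
HB.instance Definition _ (X : topologicalType) :=
  gen_choiceMixin (hyperspace X).

(* Vietoris topology: subbase U^+ = {A | A ⊆ U}, U^- = {A | A ∩ U ≠ ∅}, U open. *)
Definition vietoris_subbase (X : topologicalType) (i : bool * set X)
  : set (hyperspace X) :=
  if i.1 then [set A | proj1_sig A `<=` i.2]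
  else [set A | proj1_sig A `&` i.2 !=set0].

HB.instance Definition _ (X : topologicalType) :=
  @isSubBaseTopological.Build (hyperspace X) (bool * set X)%type
    [set i | open i.2] (@vietoris_subbase X).

From HB Require Import structures.
From mathcomp Require Import all_boot all_order all_algebra.
From mathcomp Require Import all_classical all_reals all_analysis.
From mathcomp Require Import finmap.
Local Open Scope classical_set_scope.

(* Consider the incidence set Z = {(x, A) | A \in C, x \in A} in X * K(X) and its
   quasi-components.  Because C is connected and the fibres of Z are compact, every
   quasi-component of a closed lower semicontinuous part of Z meets every fibre over C.
   Hence, if each quasi-component of Z is vertical (has a single first coordinate),
   every A in C is contained in T and conversely, so C = {T}.
   Otherwise Zorn's lemma and the scatteredness of T give a non-vertical
   quasi-component W0 and a clopen P containing it in which all other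
   quasi-components are vertical.  The same argument inside W0 gives a clopen piece
   of W0 whose projection to X is connected, hence a point y.  Compact hereditarily
   disconnected Hausdorff spaces are zero-dimensional, so a clopen part of T around y
   avoids the points x with {x} * C contained in W0; it extends the piece to a clopen
   subset of Z meeting W0 only in the piece, contradicting the choice of W0. *)

Set Implicit Arguments. Unset Strict Implicit. Unset Printing Implicit Defensive.

Lemma near_all_seq (T : Type) (I : eqType) (F : set_system T) {FF : Filter F}
    (s : seq I) (P : I -> set T) :
  (forall i, i \in s -> F (P i)) -> \forall x \near F, forall i, i \in s -> P i x.
Proof.
elim: s => [|a s IH] FP; first exact: filterE.
have FPs : \forall x \near F, forall i, i \in s -> P i x.
  by apply: IH => i si; apply: FP; rewrite inE si orbT.
apply: filterS2 (FP a (mem_head a s)) FPs => x Pa Ps i.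
by rewrite inE => /orP[/eqP -> //|/Ps].
Qed.

Lemma closure_subset_closed (S : topologicalType) (A F : set S) :
  closed F -> A `<=` F -> closure A `<=` F.
Proof. by move=> cF AF; rewrite [X in _ `<=` X]((closure_id F).1 cF); exact: closureS. Qed.

Section Compactness.
Context {S : topologicalType}.

Lemma compact_finite_cover (K : set S) (V : S -> set S) :
  compact K -> (forall x, K x -> nbhs x (V x)) ->
  exists s : seq S, forall y, K y -> exists2 x, x \in s /\ K x & V x y.
Proof.
move=> /compact_near_coveringP cK KV.
pose F := [set Q : set (seq S) |
  exists s0 : seq S, forall s : seq S, {subset s0 <= s} -> Q s].
have FF : Filter F.
  split; first by exists [::].
  - move=> Q1 Q2 [s1 Q1s] [s2 Q2s]; exists (s1 ++ s2) => s sub; split.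
    + by apply: Q1s => x xs; apply: sub; rewrite mem_cat xs.
    + by apply: Q2s => x xs; apply: sub; rewrite mem_cat xs orbT.
  - by move=> Q1 Q2 Q12 [s0 Q1s]; exists s0 => s /Q1s /Q12.
have := cK _ F (fun s y => exists2 x, x \in s /\ K x & V x y) FF; case.
  move=> x Kx; exists (V x, [set s | x \in s]).
    by split; [exact: KV | exists [:: x] => s; apply; exact: mem_head].
  by move=> [y s] /= [Vy xs]; exists x.
by move=> s0 /(_ s0 (fun _ => id)); exists s0.
Qed.

Lemma compact_separation (A K : set S) : compact K ->
  (forall k, K k -> exists U V, [/\ open U, open V, A `<=` U, V k & U `&` V = set0]) ->
  exists U V, [/\ open U, open V, A `<=` U, K `<=` V & U `&` V = set0].
Proof.
move=> cK sepK.
have /choice[f fP] : forall k, exists UV : set S * set S,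
    [/\ open UV.1, open UV.2, A `<=` UV.1, UV.1 `&` UV.2 = set0 & K k -> UV.2 k].
  move=> k; have [Kk|nKk] := pselect (K k).
    by have [U [V [oU oV AU Vk UV]]] := sepK k Kk; exists (U, V).
  by exists (setT, set0); split; rewrite /= ?setI0 //; [exact: openT | exact: open0].
have [s cover] := @compact_finite_cover K (fun k => (f k).2) cK (fun k Kk =>
  let: And5 _ oV _ _ Vk := fP k in open_nbhs_nbhs (conj oV (Vk Kk))).
exists [set u | forall k, k \in s -> (f k).1 u].
exists (\bigcup_(k in [set k | k \in s]) (f k).2).
split.
- rewrite openE => u fu; apply: near_all_seq => k ks.
  by have [oU _ _ _ _] := fP k; apply: open_nbhs_nbhs; split => //; exact: fu.
- by apply: bigcup_open => k _; have [] := fP k.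
- by move=> a Aa k _; have [_ _ AU _ _] := fP k; exact: AU.
- by move=> y /cover[k [ks _] Vy]; exists k.
- apply/seteqP; split => // u [fu [k ks Vu]].
  by have [_ _ _ <- _] := fP k; split => //; exact: fu.
Qed.

End Compactness.

Section HausdorffSeparation.
Context {X : topologicalType}.
Hypothesis hX : hausdorff_space X.

Lemma hausdorff_separation_point (x : X) (K : set X) : compact K -> ~ K x ->
  exists U V, [/\ open U, open V, [set x] `<=` U, K `<=` V & U `&` V = set0].
Proof.
move=> cK nKx; apply: compact_separation cK _ => k Kk.
have xk : x != k by apply/eqP => xk; apply: nKx; rewrite xk.
move: hX; rewrite open_hausdorff => /(_ x k xk)[[U V] /= [xU kV] [oU oV /eqP UV]].
by exists U, V; split => //; [move=> _ ->; exact: set_mem | exact: set_mem].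
Qed.

Lemma hausdorff_separation (A B : set X) : compact A -> compact B ->
  A `&` B = set0 ->
  exists U V, [/\ open U, open V, A `<=` U, B `<=` V & U `&` V = set0].
Proof.
move=> cA cB AB; apply: compact_separation cB _ => b Bb.
have nAb : ~ A b by move=> Ab; rewrite -[False]/(set0 b) -AB.
have [U [V [oU oV bU AV UV]]] := hausdorff_separation_point cA nAb.
by exists V, U; split => //; [exact: bU | rewrite setIC].
Qed.

End HausdorffSeparation.

Section RelativeClopen.
Context {Y : topologicalType}.
Implicit Types (G P Q : set Y) (z w : Y).

Definition rel_open G P :=
  P `<=` G /\ forall z, P z -> \forall w \near z, G w -> P w.

Definition rel_closed G P :=
  P `<=` G /\ forall z, G z -> ~ P z -> \forall w \near z, G w -> ~ P w.

Definition rel_clopen G P := rel_open G P /\ rel_closed G P.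

Lemma rel_clopenT G : rel_clopen G G.
Proof. by split; split => // z Gz; exact: filterE. Qed.

Lemma rel_clopenC G P : rel_clopen G P -> rel_clopen G (G `\` P).
Proof.
move=> [[PG oP] [_ cP]]; split; split; [by move=> w [] | | by move=> w [] |].
- by move=> z [Gz nPz]; apply: filterS (cP z Gz nPz) => w nPw Gw; split => //; exact: nPw.
- move=> z Gz nz; have Pz : P z by apply: contrapT => nPz; apply: nz.
  by apply: filterS (oP z Pz) => w Pw Gw [_]; apply; exact: Pw.
Qed.

Lemma rel_clopenI G P Q : rel_clopen G P -> rel_clopen G Q -> rel_clopen G (P `&` Q).
Proof.
move=> [[PG oP] [_ cP]] [[QG oQ] [_ cQ]]; split; split;
  [by move=> w [/PG] | | by move=> w [/PG] |].
- move=> z [Pz Qz]; apply: filterS2 (oP z Pz) (oQ z Qz) => w Pw Qw Gw.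
  by split; [exact: Pw | exact: Qw].
- move=> z Gz nPQz; have [Pz|nPz] := pselect (P z).
    have nQz : ~ Q z by move=> Qz; apply: nPQz.
    by apply: filterS (cQ z Gz nQz) => w nQw Gw [_]; exact: nQw.
  by apply: filterS (cP z Gz nPz) => w nPw Gw [Pw _]; exact: nPw Gw Pw.
Qed.

Lemma rel_clopen_bigI (I : eqType) G (s : seq I) (P : I -> set Y) :
  (forall i, rel_clopen G (P i)) ->
  rel_clopen G [set w | G w /\ forall i, i \in s -> P i w].
Proof.
move=> cP; elim: s => [|a s IH].
  rewrite (_ : [set w | _] = G); first exact: rel_clopenT.
  by apply/seteqP; split => w // [].
rewrite (_ : [set w | _] = P a `&` [set w | G w /\ forall i, i \in s -> P i w]).
  exact: rel_clopenI.
apply/seteqP; split => w.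
  move=> [Gw Pw]; split; first by apply: Pw; exact: mem_head.
  by split => // i si; apply: Pw; rewrite inE si orbT.
by move=> [Paw [Gw Pw]]; split => // i; rewrite inE => /orP[/eqP -> //|]; exact: Pw.
Qed.

Lemma rel_clopen_split G P U V : rel_clopen G P -> open U -> open V ->
  U `&` V = set0 -> P `<=` U `|` V -> rel_clopen G (P `&` U).
Proof.
move=> [[PG oP] [_ cP]] oU oV UV PUV; split; split;
  [by move=> w [/PG] | | by move=> w [/PG] |].
- move=> z [Pz Uz]; have nU : nbhs z U by apply: open_nbhs_nbhs.
  by apply: filterS2 (oP z Pz) nU => w Pw Uw Gw; split => //; exact: Pw.
- move=> z Gz nPUz; have [Pz|nPz] := pselect (P z); last first.
    by apply: filterS (cP z Gz nPz) => w nPw Gw [Pw _]; exact: nPw Gw Pw.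
  have Vz : V z by case: (PUV z Pz) => // Uz; case: nPUz.
  have nV : nbhs z V by apply: open_nbhs_nbhs.
  by apply: filterS nV => w Vw _ [_ Uw]; rewrite -[False]/(set0 w) -UV.
Qed.

Lemma rel_closed_trans Z G P : rel_closed Z G -> rel_closed G P -> rel_closed Z P.
Proof.
move=> [GZ cG] [PG cP]; split => [w /PG/GZ //|z Zz nPz].
have [Gz|nGz] := pselect (G z).
  by apply: filterS (cP z Gz nPz) => w nPw _ Pw; exact: nPw (PG _ Pw) Pw.
by apply: filterS (cG z Zz nGz) => w nGw Zw Pw; exact: nGw Zw (PG _ Pw).
Qed.

Lemma closed_rel_closed G P : closed G -> rel_closed G P -> closed P.
Proof.
move=> cG [PG cP]; rewrite closedE => z nnP; apply: contrapT => nPz; apply: nnP.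
have [Gz|nGz] := pselect (G z).
  by apply: filterS (cP z Gz nPz) => w nPw Pw; exact: nPw (PG _ Pw) Pw.
have nG : nbhs z (~` G) by apply: open_nbhs_nbhs; split => //; exact: closed_openC.
by apply: filterS nG => w nGw Pw; exact: nGw (PG _ Pw).
Qed.

Lemma connected_rel_clopen C S : connected C -> rel_clopen C S -> S !=set0 -> S = C.
Proof.
move=> cC [[SC oS] [_ cS]] S0; apply: cC => //.
- exists [set B | C B -> S B]°; first exact: open_interior.
  apply/seteqP; split => [A SA|A [CA /nbhs_singleton]]; last exact.
  by split; [exact: SC | exact: oS].
- exists (~` [set B | C B -> ~ S B]°); first exact/open_closedC/open_interior.
  apply/seteqP; split => [A SA|A [CA nS]].
    by split; [exact: SC | move=> /nbhs_singleton/(_ (SC _ SA))].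
  by apply: contrapT => nSA; apply: nS; exact: cS.
Qed.

Definition qcomp G z := [set w | G w /\ forall P, rel_clopen G P -> P z -> P w].

Lemma qcomp_refl G z : G z -> qcomp G z z.
Proof. by split. Qed.

Lemma qcomp_sub G P z : rel_clopen G P -> P z -> qcomp G z `<=` P.
Proof. by move=> cP Pz w [_]; apply. Qed.

Lemma qcomp_separate G z w : G w -> ~ qcomp G z w ->
  exists2 P, rel_clopen G P /\ P z & ~ P w.
Proof.
move=> Gw nzw; apply: contrapT => nP; apply: nzw; split => // P cP Pz.
by apply: contrapT => nPw; apply: nP; exists P.
Qed.

Lemma qcomp_sym G z w : G z -> qcomp G z w -> qcomp G w z.
Proof.
move=> Gz [Gw zw]; split => // P cP Pw; apply: contrapT => nPz.
by have [] := zw _ (rel_clopenC cP) (conj Gz nPz).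
Qed.

Lemma qcomp_trans G z w u : qcomp G z w -> qcomp G w u -> qcomp G z u.
Proof. by move=> [_ zw] [Gu wu]; split => // P cP Pz; apply: (wu P cP); apply: zw. Qed.

Lemma qcomp_rel_closed G z : rel_closed G (qcomp G z).
Proof.
split => [w []//|w Gw nzw].
have [P [cP Pz] nPw] := qcomp_separate Gw nzw.
by apply: filterS (cP.2.2 w Gw nPw) => u nPu Gu [_ zu]; exact: nPu Gu (zu P cP Pz).
Qed.

Lemma rel_clopen_avoid_compact {S : topologicalType} G z (K : set S) (f : S -> Y) :
  G z -> compact K ->
  (forall k, K k -> exists2 P, rel_clopen G P /\ P z & \forall k' \near k, ~ P (f k')) ->
  exists2 P, rel_clopen G P /\ P z & forall k, K k -> ~ P (f k).
Proof.
move=> Gz cK avoidK.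
have /choice[P PP] : forall k, exists P,
    [/\ rel_clopen G P, P z & K k -> \forall k' \near k, ~ P (f k')].
  move=> k; have [Kk|nKk] := pselect (K k).
    by have [P [cP Pz] nP] := avoidK k Kk; exists P.
  by exists G; split; [exact: rel_clopenT | |].
have [s cover] := @compact_finite_cover _ K (fun k k' => ~ P k (f k')) cK
  (fun k Kk => let: And3 _ _ nP := PP k in nP Kk).
exists [set w | G w /\ forall k, k \in s -> P k w].
  split; first by apply: rel_clopen_bigI => k; have [] := PP k.
  by split => // k _; have [] := PP k.
by move=> k' /cover[k [ks _] nPk] [_ /(_ k ks)].
Qed.

End RelativeClopen.

Section CompactQuasiComponents.
Context {X : topologicalType}.
Hypothesis hX : hausdorff_space X.
Implicit Types (K D : set X) (y : X).

Lemma qcomp_compact_avoid K y k : compact K -> K k -> ~ qcomp K y k ->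
  exists2 P, rel_clopen K P /\ P y & \forall k' \near k, ~ P k'.
Proof.
move=> cK Kk nqk; have [P [cP Py] nPk] := qcomp_separate Kk nqk.
exists P => //; apply: open_nbhs_nbhs; split => //.
exact/closed_openC/(closed_rel_closed (compact_closed hX cK) cP.2).
Qed.

Lemma qcomp_compact_split K E0 E1 y : compact K -> closed E0 -> closed E1 ->
  E0 `&` E1 = set0 -> qcomp K y = E0 `|` E1 -> E0 y -> E1 = set0.
Proof.
move=> cK cE0 cE1 E01 qE E0y.
have qK : qcomp K y `<=` K by move=> w [].
have Ky : K y by apply: qK; rewrite qE; left.
have cptE E : closed E -> E `<=` E0 `|` E1 -> compact E.
  move=> cE EE; apply: (subclosed_compact cE cK).
  by rewrite -qE in EE; exact: subset_trans EE qK.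
have [U0 [U1 [oU0 oU1 E0U0 E1U1 U01]]] :=
  hausdorff_separation hX (cptE _ cE0 (@subsetUl _ _ _))
    (cptE _ cE1 (@subsetUr _ _ _)) E01.
pose R := K `&` ~` (U0 `|` U1).
have cR : compact R.
  apply: (subclosed_compact _ cK (@subIsetl _ _ _)).
  exact: (closedI (compact_closed hX cK) (open_closedC (openU oU0 oU1))).
have avoidR k : R k -> exists2 P, rel_clopen K P /\ P y & \forall k' \near k, ~ P k'.
  move=> [Kk nUk]; apply: qcomp_compact_avoid cK Kk _.
  by rewrite qE => -[/E0U0|/E1U1] Uk; apply: nUk; [left|right].
have [P [cP Py] PR] := @rel_clopen_avoid_compact _ _ K y R id Ky cR avoidR.
have PU : P `<=` U0 `|` U1.
  move=> w Pw; apply: contrapT => nUw; apply: (PR w) => //.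
  by split => //; have [[PK _] _] := cP; exact: PK.
have cPU0 := rel_clopen_split cP oU0 oU1 U01 PU.
have qU0 := qcomp_sub cPU0 (conj Py (E0U0 _ E0y)).
apply/seteqP; split => // w E1w; rewrite -U01; split; last exact: E1U1.
by have /qU0[] : qcomp K y w by rewrite qE; right.
Qed.

Lemma qcomp_compact_connected K y : compact K -> K y -> connected (qcomp K y).
Proof.
move=> cK Ky B [b Bb] [U oU BU] [F cF BF].
have Bq : B `<=` qcomp K y by rewrite BU; exact: subIsetl.
have cq : closed (qcomp K y).
  exact: closed_rel_closed (compact_closed hX cK) (qcomp_rel_closed K y).
have cB : closed B by rewrite BF; exact: closedI.
have cB' : closed (qcomp K y `\` B).
  rewrite (_ : _ `\` B = qcomp K y `&` ~` U); first exact: closedI cq (open_closedC oU).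
  by rewrite BU setDIr setDv set0U setDE.
have qE : qcomp K y = B `|` (qcomp K y `\` B) by rewrite setDUK.
have [By|nBy] := pselect (B y).
  apply/seteqP; split => //; rewrite -setD_eq0.
  by apply: qcomp_compact_split cK cB cB' _ qE By; rewrite setDIK.
have qy : (qcomp K y `\` B) y by split => //; exact: qcomp_refl.
have := qcomp_compact_split cK cB' cB _ _ qy.
by rewrite setUC setIC setDIK => /(_ erefl qE) B0; rewrite B0 in Bb.
Qed.

Lemma hereditarily_disconnected_rel_clopen K D y :
  hereditarily_disconnected X -> compact K -> K y -> closed D -> D `<=` K -> ~ D y ->
  exists2 U, rel_clopen K U /\ U y & forall x, D x -> ~ U x.
Proof.
move=> hd cK Ky cD DK nDy.
have [x qx] :=
  hd (qcomp K y) (ex_intro _ y (qcomp_refl Ky)) (qcomp_compact_connected cK Ky).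
have qy : qcomp K y = [set y] by move: (qcomp_refl Ky); rewrite qx => ->.
have cD' : compact D by exact: subclosed_compact cD cK DK.
apply: (@rel_clopen_avoid_compact _ _ K y D id Ky cD') => k Dk.
apply: qcomp_compact_avoid cK (DK _ Dk) _.
by rewrite qy => /= ky; apply: nDy; rewrite -ky.
Qed.

End CompactQuasiComponents.

Section ProductNbhs.
Context {T U : topologicalType}.
Implicit Types (p : T * U) (Q : set (T * U)).

Lemma near_fst p Q : nbhs p Q -> \forall x \near p.1, Q (x, p.2).
Proof.
move=> [[Q1 Q2] [Q1p Q2p] sQ]; apply: filterS Q1p => x Q1x.
by apply: (sQ (x, p.2)); split => //; exact: nbhs_singleton.
Qed.

Lemma near_snd p Q : nbhs p Q -> \forall a \near p.2, Q (p.1, a).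
Proof.
move=> [[Q1 Q2] [Q1p Q2p] sQ]; apply: filterS Q2p => a Q2a.
by apply: (sQ (p.1, a)); split => //; exact: nbhs_singleton.
Qed.

Lemma near_fst_pair p (V : set T) : nbhs p.1 V -> \forall w \near p, V w.1.
Proof. by move=> Vp; exact: (@cvg_fst _ _ (nbhs p.1) (nbhs p.2) _ V Vp). Qed.

End ProductNbhs.

Section Vietoris.
Context {X : topologicalType}.
Local Notation H := (hyperspace X).

Definition hset (A : H) : set X := proj1_sig A.

Lemma hset_inj : injective hset.
Proof. by move=> [A pA] [B pB] /= AB; subst B; exact: eq_exist. Qed.

Lemma hset_compact (A : H) : compact (hset A).
Proof. by case: A => ? []. Qed.

Lemma hset_closed (A : H) : hausdorff_space X -> closed (hset A).
Proof. by move=> hX; exact: compact_closed hX (@hset_compact A). Qed.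

Lemma vietoris_subbase_open (i : bool * set X) : open i.2 -> open (vietoris_subbase i).
Proof.
move=> oi; exists [set vietoris_subbase i]; last by rewrite bigcup_set1.
move=> _ ->; exists (fset1 i); last by rewrite set_fset1 bigcap_set1.
by move=> j; rewrite inE => /eqP ->; apply/mem_set.
Qed.

Lemma near_hset_sub (U : set X) (A : H) : open U -> hset A `<=` U ->
  \forall B \near A, hset B `<=` U.
Proof.
move=> oU AU; apply: open_nbhs_nbhs; split => //.
exact: (@vietoris_subbase_open (true, U)).
Qed.

Lemma near_hset_meet (U : set X) (A : H) : open U -> hset A `&` U !=set0 ->
  \forall B \near A, hset B `&` U !=set0.
Proof.
move=> oU AU; apply: open_nbhs_nbhs; split => //.
exact: (@vietoris_subbase_open (false, U)).
Qed.

End Vietoris.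

Arguments hset_compact {X} A.
Arguments hset_closed {X} A.

Section ClosedLowerSemicontinuous.
Context {X : topologicalType}.
Hypothesis hX : hausdorff_space X.
Variable C : set (hyperspace X).
Hypothesis cC : connected C.
Local Notation H := (hyperspace X).
Implicit Types (G P W : set (X * H)) (z w : X * H) (A : H).

Definition incidence : set (X * H) := [set z | C z.2 /\ hset z.2 z.1].

Definition lower_semicontinuous G := forall z, G z -> forall V, nbhs z.1 V ->
  \forall A \near z.2, C A -> exists2 y, V y & G (y, A).

Definition closed_lsc G := rel_closed incidence G /\ lower_semicontinuous G.

Lemma incidence_closed_lsc : closed_lsc incidence.
Proof.
split; first by split => // z _; apply.
move=> [x A] [CA Ax] V /= /nbhs_interior Vx.
have AV : hset A `&` V° !=set0 by exists x; split => //; exact: nbhs_singleton.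
apply: filterS (near_hset_meet (@open_interior _ V) AV) => B [y [By Vy]] CB.
by exists y; [exact: interior_subset | split].
Qed.

Lemma rel_closed_near_fst P A y : rel_closed incidence P -> C A -> hset A y ->
  ~ P (y, A) -> \forall y' \near y, ~ P (y', A).
Proof.
move=> [PZ cP] CA Ay nPy; apply: filterS (near_fst (cP (y, A) (conj CA Ay) nPy)).
by move=> y' nPy' Py'; exact: nPy' (PZ _ Py') Py'.
Qed.

Lemma rel_closed_usc P A : rel_closed incidence P -> C A -> (forall y, ~ P (y, A)) ->
  \forall B \near A, C B -> forall y, ~ P (y, B).
Proof.
move=> [PZ cP] CA nPA.
have /choice[f fP] : forall y, exists VW : set X * set H, [/\ nbhs y VW.1, nbhs A VW.2 &
    hset A y -> forall w, VW.1 w.1 -> VW.2 w.2 -> incidence w -> ~ P w].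
  move=> y; have [Ay|nAy] := pselect (hset A y); last first.
    by exists (setT, setT); split => //; exact: filterT.
  have [[V W] [Vy WA] sVW] := cP (y, A) (conj CA Ay) (nPA y).
  by exists (V, W); split => // _ w Vw Ww; exact: (sVW w).
have [s cover] := @compact_finite_cover _ (hset A) (fun y => (f y).1°) (hset_compact A)
  (fun y _ => let: And3 Vy _ _ := fP y in nbhs_interior Vy).
pose U := \bigcup_(y in [set y | y \in s /\ hset A y]) (f y).1°.
have AU : hset A `<=` U by move=> y /cover[y0 ? ?]; exists y0.
have nearU := near_hset_sub (bigcup_open (fun y _ => @open_interior _ (f y).1)) AU.
have nearW : \forall B \near A, forall y, y \in s -> (f y).2 B.
  by apply: (@near_all_seq _ _ (nbhs A) _ s (fun y => (f y).2)) => y _; have [] := fP y.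
apply: filterS2 nearU nearW => B BU BW CB y' Py'.
have ZB := PZ _ Py'; have [y [ys Ay] Vy'] := BU y' ZB.2.
by have [_ _ nP] := fP y; exact: nP Ay (y', B) (interior_subset Vy') (BW y ys) ZB Py'.
Qed.

Lemma closed_lsc_rel_clopen G P : closed_lsc G -> rel_clopen G P -> closed_lsc P.
Proof.
move=> [cG lG] [[PG oP] cP]; split; first exact: rel_closed_trans cG cP.
move=> z Pz V Vz; have [[V1 W1] [V1z W1z] sP] := oP z Pz.
apply: filterS2 (lG z (PG _ Pz) _ (filterI Vz V1z)) W1z => A GA W1A CA.
by have [y [Vy V1y] Gy] := GA CA; exists y => //; exact: (sP (y, A)).
Qed.

Lemma closed_lsc_full G z A : closed_lsc G -> G z -> C A -> exists y, G (y, A).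
Proof.
move=> [cG lG] Gz CA; pose S := [set B | C B /\ exists y, G (y, B)].
suff SC : S = C by move: CA; rewrite -SC => -[].
have GZ : G `<=` incidence by case: cG.
apply: connected_rel_clopen cC _ _; last first.
  by exists z.2; split; [case: (GZ _ Gz) | exists z.1; case: z Gz].
split; split; [by move=> B [] | | by move=> B [] |].
- move=> B [CB [y Gy]]; apply: filterS (lG _ Gy setT filterT) => B' GB' CB'.
  by split => //; have [y' _ ?] := GB' CB'; exists y'.
- move=> B CB nSB; have nG y : ~ G (y, B) by move=> Gy; apply: nSB; split => //; exists y.
  apply: filterS (rel_closed_usc cG CB nG) => B' nG' CB' [_ [y Gy]].
  exact: nG' CB' y Gy.
Qed.

Lemma qcomp_avoid_fiber G z A (K : set X) : closed_lsc G -> G z -> C A ->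
  compact K -> K `<=` hset A -> (forall y, K y -> ~ qcomp G z (y, A)) ->
  exists2 P, rel_clopen G P /\ P z & forall y, K y -> ~ P (y, A).
Proof.
move=> [cG _] Gz CA cK KA nq.
apply: (@rel_clopen_avoid_compact _ _ G z K (fun y => (y, A)) Gz cK) => k Kk.
have [P [cP Pz] nPk] : exists2 P, rel_clopen G P /\ P z & ~ P (k, A).
  have [Gk|nGk] := pselect (G (k, A)); first exact: qcomp_separate Gk (nq k Kk).
  by exists G => //; split => //; exact: rel_clopenT.
by exists P => //; exact: rel_closed_near_fst (rel_closed_trans cG cP.2) CA (KA _ Kk) nPk.
Qed.

Lemma qcomp_full G z A : closed_lsc G -> G z -> C A -> exists y, qcomp G z (y, A).
Proof.
move=> sG Gz CA; apply: contrapT => nq.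
have [P [cP Pz] nP] := qcomp_avoid_fiber sG Gz CA (hset_compact A) (@subset_refl _ _)
  (fun y _ qy => nq (ex_intro _ y qy)).
have [y Py] := closed_lsc_full (closed_lsc_rel_clopen sG cP) Pz CA.
apply: (nP y) => //; have [[PG _] _] := cP.
by have [[GZ _] _] := sG; have [] := GZ _ (PG _ Py).
Qed.

Lemma qcomp_fiber_closed G z A : closed_lsc G -> C A ->
  closed [set y | hset A y /\ qcomp G z (y, A)].
Proof.
move=> [cG _] CA; rewrite closedE => y ncl; apply: contrapT => nqy; apply: ncl.
have [Ay|nAy] := pselect (hset A y).
  have nq : ~ qcomp G z (y, A) by move=> q; apply: nqy.
  have cq := rel_closed_trans cG (qcomp_rel_closed G z).
  by apply: filterS (rel_closed_near_fst cq CA Ay nq) => y' nq' [_ q]; exact: nq' q.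
have nA : nbhs y (~` hset A).
  by apply: open_nbhs_nbhs; split => //; exact: closed_openC (hset_closed A hX).
by apply: filterS nA => y' nA' [].
Qed.

Lemma qcomp_constant_fst G x A1 A2 : (forall A, C A -> G (x, A)) -> C A1 -> C A2 ->
  qcomp G (x, A1) (x, A2).
Proof.
move=> Gx CA1 CA2; split; first exact: Gx.
move=> P [[PG oP] [_ cP]] P1; pose S := [set A | C A /\ P (x, A)].
suff SC : S = C by move: CA2; rewrite -SC => -[].
apply: connected_rel_clopen cC _ _; last by exists A1.
split; split; [by move=> A [] | | by move=> A [] |].
- move=> A [CA PA]; apply: filterS (near_snd (oP _ PA)) => B PB CB.
  by split => //; exact: PB (Gx B CB).
- move=> A CA nSA; have nPA : ~ P (x, A) by move=> PA; apply: nSA.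
  apply: filterS (near_snd (cP _ (Gx A CA) nPA)) => B nPB CB [_ PB].
  exact: nPB (Gx B CB) PB.
Qed.

Lemma qcomp_fst_connected G W z : rel_clopen G W -> G z -> W `<=` qcomp G z ->
  connected (fst @` W).
Proof.
move=> [[WG oW] [_ cW]] Gz Wq B [b Bb] [U oU BU] [F cF BF].
pose P := [set w | W w /\ U w.1].
have cP : rel_clopen G P.
  split; split; [by move=> w [/WG] | | by move=> w [/WG] |].
  - move=> w [Ww Uw]; have nU : nbhs w.1 U by apply: open_nbhs_nbhs.
    by apply: filterS2 (oW w Ww) (near_fst_pair nU) => u Wu Uu Gu; split; [exact: Wu|].
  - move=> w Gw nPw; have [Ww|nWw] := pselect (W w); last first.
      by apply: filterS (cW w Gw nWw) => u nWu Gu [Wu _]; exact: nWu Gu Wu.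
    have nFw : ~ F w.1.
      move=> Fw; have : B w.1 by rewrite BF; split => //; exists w.
      by rewrite BU => -[_ Uw]; apply: nPw.
    have nF : nbhs w.1 (~` F) by apply: open_nbhs_nbhs; split => //; exact: closed_openC.
    apply: filterS (near_fst_pair nF) => u nFu _ [Wu Uu]; apply: nFu.
    have : B u.1 by rewrite BU; split => //; exists u.
    by rewrite BF => -[].
move: Bb; rewrite BU => -[[w0 Ww0 <-] Uw0].
apply/seteqP; split => [x [] //|x [w Ww <-]]; split; first by exists w.
have zw0 := Wq _ Ww0; have zw := Wq _ Ww.
by have [_ /(_ P cP (conj Ww0 Uw0)) [_]] := qcomp_trans (qcomp_sym Gz zw0) zw.
Qed.

End ClosedLowerSemicontinuous.

Lemma chain_upper_bound_seq (T : Type) (I : eqType) (F : set (set T)) (g : I -> set T)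
    (s : seq I) (A1 : set T) :
  total_on F subset -> F A1 -> (forall i, F (g i)) ->
  exists2 A, F A & forall i, i \in s -> g i `<=` A.
Proof.
move=> Ftot FA1 Fg; elim: s => [|i s [A FA gA]]; first by exists A1.
have [giA|Agi] := Ftot _ _ (Fg i) FA.
  by exists A => // j; rewrite inE => /orP[/eqP -> //|/gA].
exists (g i) => // j; rewrite inE => /orP[/eqP -> //|/gA gjA].
exact: subset_trans gjA Agi.
Qed.

Section IsolatedQuasiComponent.
Context {X : topologicalType}.
Hypothesis hX : hausdorff_space X.
Variable C : set (hyperspace X).
Hypothesis cC : connected C.
Variables (G S : set (X * hyperspace X)) (T : hyperspace X).
Hypotheses (sG : closed_lsc C G) (CT : C T) (sT : scattered (hset T)).
Hypothesis SG : S `<=` G.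

Definition qcomp_meets_outside (A : set X) := closed (hset T `\` A) /\
  forall z, S z -> exists2 y, (hset T `\` A) y & qcomp G z (y, T).

Lemma qcomp_meets_outside_bigcup (F : set (set X)) :
  F `<=` qcomp_meets_outside -> total_on F subset ->
  qcomp_meets_outside (\bigcup_(A in F) A).
Proof.
move=> FP Ftot; split.
  rewrite (_ : _ `\` _ = hset T `&` \bigcap_(A in F) (hset T `\` A)).
    by apply: closedI (hset_closed T hX) (closed_bigI _) => A /FP[].
  apply/seteqP; split => y.
    by move=> [Ty nFy]; split => // A FA; split => // Ay; apply: nFy; exists A.
  by move=> [Ty TFy]; split => // -[A FA Ay]; have [] := TFy A FA.
move=> z Sz; apply: contrapT => nmeet.
pose K := [set y | hset T y /\ qcomp G z (y, T)].
have KF y : K y -> exists2 A, F A & A y.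
  move=> [Ty qy]; apply: contrapT => nFy; apply: nmeet; exists y; last exact: qy.
  by split => // -[A FA Ay]; apply: nFy; exists A.
have cK : compact K.
  apply: subclosed_compact (qcomp_fiber_closed hX sG CT) (hset_compact T) _.
  by move=> y [].
have [y1 qy1] := qcomp_full cC sG (SG Sz) CT.
have [A1 FA1 _] : exists2 A, F A & A y1.
  by apply: KF; split => //; have [[GZ _] _] := sG; have [] := GZ _ qy1.1.
have /choice[g gP] : forall y, exists A, F A /\ (K y -> A y).
  move=> y; have [/KF[A FA Ay]|nKy] := pselect (K y); first by exists A.
  by exists A1; split => // /nKy.
have Kg y : K y -> nbhs y (~` (hset T `\` g y)).
  move=> Ky; apply: open_nbhs_nbhs; split; first exact/closed_openC/(FP _ (gP y).1).1.
  by move=> [_]; apply; exact: (gP y).2 Ky.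
have [s cover] := compact_finite_cover cK Kg.
have [A FA gA] := chain_upper_bound_seq s Ftot FA1 (fun y => (gP y).1).
have [y [Ty nAy] qy] := (FP _ FA).2 z Sz.
have [y0 [y0s _] nTgy] := cover y (conj Ty qy).
by apply: nAy; apply: (gA y0 y0s); apply: contrapT => ngy; apply: nTgy.
Qed.

Lemma isolated_qcomp : S !=set0 ->
  exists z0 P, [/\ S z0, rel_clopen G P, P z0 & forall w, P w -> S w -> qcomp G z0 w].
Proof.
(* A is maximal (Zorn) and x isolated in T `\` A.  As A `|` [set x] is not admissible,
   some quasi-component meets the fibre over T only at x (within T `\` A); a clopen
   set separating it from the rest of T `\` A over T contains no other S-component. *)
move=> [zb Szb].
have [A [[cA meetA] maxA]] := Zorn_bigcup qcomp_meets_outside_bigcup.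
have [yb TAyb _] := meetA zb Szb.
have [x [TAx [U [oU UTA]]]] := sT (fun y => @proj1 _ _) (ex_intro _ yb TAyb).
pose B := A `|` [set x].
have AB : A `<` B by split => [y Ay|/(_ x (or_intror erefl))]; [left | exact: TAx.2].
have xU : U x by have : [set x] x by []; rewrite -UTA => -[].
have TB : hset T `\` B = (hset T `\` A) `&` ~` U.
  apply/seteqP; split => y.
    move=> [Ty nBy]; have TAy : (hset T `\` A) y by split => // Ay; apply: nBy; left.
    split => // Uy; apply: nBy; right.
    by have : (U `&` (hset T `\` A)) y by []; rewrite UTA.
  by move=> [[Ty nAy] nUy]; split => // -[//|/= yx]; apply: nUy; rewrite yx.
have clTB : closed (hset T `\` B) by rewrite TB; exact: closedI cA (open_closedC oU).
have cTB := subclosed_compact clTB (hset_compact T) (fun y => @proj1 _ _).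
have [z0 Sz0 nz0] : exists2 z0, S z0 & forall y, (hset T `\` B) y -> ~ qcomp G z0 (y, T).
  apply: contrapT => nz0; apply: (maxA B AB); split => //.
  move=> z Sz; apply: contrapT => nmeet; apply: nz0; exists z => // y TBy qy.
  by apply: nmeet; exists y.
have x_only y : (hset T `\` A) y -> ~ (hset T `\` B) y -> y = x.
  move=> [Ty nAy] nTBy; have : B y by apply: contrapT => nBy; apply: nTBy.
  by case.
have [y0 TAy0 qy0] := meetA z0 Sz0.
have y0x := x_only y0 TAy0 (fun TBy0 => nz0 y0 TBy0 qy0).
have [P [cP Pz0] nP] := qcomp_avoid_fiber sG (SG Sz0) CT cTB (fun y => @proj1 _ _) nz0.
exists z0, P; split => // w Pw Sw.
have [y TAy qy] := meetA w Sw.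
have yx := x_only y TAy (fun TBy => nP y TBy (qcomp_sub cP Pw qy)).
rewrite yx -y0x in qy.
exact: qcomp_trans qy0 (qcomp_sym (SG Sw) qy).
Qed.

End IsolatedQuasiComponent.

Section NoBadPoint.
Context {X : topologicalType}.
Hypotheses (hX : hausdorff_space X) (hd : hereditarily_disconnected X).
Variable C : set (hyperspace X).
Hypothesis cC : connected C.
Variable T : hyperspace X.
Hypotheses (CT : C T) (sT : scattered (hset T)).
Local Notation H := (hyperspace X).
Local Notation Z := (incidence C).
Implicit Types (P W : set (X * H)) (z w u : X * H).

Let sZ : closed_lsc C Z := incidence_closed_lsc C.

Definition vertical z := forall w, qcomp Z z w -> w.1 = z.1.

Definition bad z := Z z /\ ~ vertical z.

Section IsolatedBad.
Variables (z0 : X * H) (P : set (X * H)).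
Hypotheses (bz0 : bad z0) (cP : rel_clopen Z P) (Pz0 : P z0).
Hypothesis Pbad : forall w, P w -> bad w -> qcomp Z z0 w.
Local Notation W0 := (qcomp Z z0).

Let Zz0 : Z z0 := bz0.1.
Let W0P : W0 `<=` P := qcomp_sub cP Pz0.
Let PZ : P `<=` Z := cP.1.1.

Definition outer : set X := fst @` (P `\` W0).

Lemma outer_full s A : outer s -> C A -> [/\ P (s, A), ~ W0 (s, A) & hset A s].
Proof.
move=> [[s' A0] [Ps nWs] /= <-] CA.
have Zs := PZ Ps.
have vs : vertical (s', A0).
  by apply: contrapT => nvs; apply: nWs; exact: Pbad Ps (conj Zs nvs).
have [y qy] := qcomp_full cC sZ Zs CA.
have /= ys := vs _ qy; subst y.
have Py := qcomp_sub cP Ps qy.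
split => //; last by have [] := PZ Py.
by move=> Wy; apply: nWs; exact: qcomp_trans Wy (qcomp_sym Zs qy).
Qed.

Lemma closure_outer_sub A : C A -> closure outer `<=` hset A.
Proof.
move=> CA; apply: closure_subset_closed (hset_closed A hX) _ => s /outer_full.
by move=> /(_ A CA)[].
Qed.

Lemma W0_constant_fst x A B : W0 (x, A) -> (forall A, C A -> hset A x) -> C B ->
  W0 (x, B).
Proof.
move=> Wx xA CB; have CA : C A by have [[]] := Wx.
exact: qcomp_trans Wx (qcomp_constant_fst cC (fun A' CA' => conj CA' (xA A' CA')) CA CB).
Qed.

Lemma W0_closed_lsc : closed_lsc C W0.
Proof.
split; first exact: qcomp_rel_closed.
move=> [x A] Wx V /= Vx.
have [clx|nclx] := pselect (closure outer x).
  apply: filterE => B CB; exists x; first exact: nbhs_singleton Vx.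
  by apply: W0_constant_fst Wx _ CB => A' CA'; exact: closure_outer_sub CA' _ clx.
have nV : nbhs x (V `&` ~` closure outer).
  apply: filterI Vx _; apply: open_nbhs_nbhs; split => //.
  exact/closed_openC/closed_closure.
have sP := closed_lsc_rel_clopen sZ cP.
apply: filterS (sP.2 _ (W0P Wx) _ nV) => B PB CB.
have [y [Vy ncly] Py] := PB CB; exists y => //.
apply: contrapT => nWy; apply: ncly; apply: subset_closure; exists (y, B) => //.
Qed.

Definition rigid_except (y : X) := [set r | r <> y /\ forall A, C A -> W0 (r, A)].

Section Separation.
Variables (y : X) (P' : set (X * H)) (U : set X).
Hypotheses (cP' : rel_clopen W0 P') (P'fst : forall w, P' w -> w.1 = y).
Hypotheses (yP' : forall A, C A -> P' (y, A)).
Hypotheses (cU : rel_clopen (hset T) U) (Uy : U y).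
Hypothesis nU : forall x, closure (rigid_except y) x -> ~ U x.

Let P'W0 : P' `<=` W0 := cP'.1.1.
Let clU : closed U := closed_rel_closed (hset_closed T hX) cU.2.

Definition extend_by_outer := P' `|` [set w | (P `\` W0) w /\ U w.1].

Let QZ : extend_by_outer `<=` Z.
Proof. by move=> w [/P'W0/W0P/PZ|[[/PZ]]]. Qed.

Let outerT u : (P `\` W0) u -> hset T u.1.
Proof. by move=> PWu; have [] := outer_full (ex_intro2 _ _ u PWu erefl) CT. Qed.

Lemma extend_by_outer_rel_open : rel_open Z extend_by_outer.
Proof.
split => // w Qw.
have Pw : P w by case: Qw => [/P'W0/W0P|[[]]].
have Uw : U w.1 by case: Qw => [/P'fst ->|[]].
have nearU : \forall u \near w, (P `\` W0) u -> U u.1.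
  by apply: filterS (near_fst_pair (cU.1.2 _ Uw)) => u TU /outerT; exact: TU.
have nearW : \forall u \near w, Z u -> W0 u -> extend_by_outer u.
  case: Qw => [P'w|[[_ nWw] _]].
    by apply: filterS (cP'.1.2 _ P'w) => u P'u _ Wu; left; exact: P'u.
  by apply: filterS ((qcomp_rel_closed Z z0).2 _ (PZ Pw) nWw) => u nWu Zu /(nWu Zu).
apply: filterS2 (filterI (cP.1.2 _ Pw) nearU) nearW => u [Pu Uu] WQ Zu.
have [Wu|nWu] := pselect (W0 u); first exact: WQ.
have PWu : (P `\` W0) u := conj (Pu Zu) nWu.
by right; split => //; exact: Uu.
Qed.

Lemma extend_by_outer_rel_closed : rel_closed Z extend_by_outer.
Proof.
split => // w Zw nQw.
have [Pw|nPw] := pselect (P w); last first.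
  apply: filterS (cP.2.2 _ Zw nPw) => u nPu Zu Qu; apply: (nPu Zu).
  by case: Qu => [/P'W0/W0P|[[]]].
have [Ww|nWw] := pselect (W0 w); last first.
  have nUw : ~ U w.1 by move=> Uw; apply: nQw; right.
  have nU_near : nbhs w.1 (~` U).
    by apply: open_nbhs_nbhs; split => //; exact: closed_openC.
  apply: filterS2 ((qcomp_rel_closed Z z0).2 _ Zw nWw) (near_fst_pair nU_near).
  by move=> u nWu nUu Zu [/P'W0/(nWu Zu)|[_ /nUu]].
have nP'w : ~ P' w by move=> P'w; apply: nQw; left.
have [clw|nclw] := pselect (closure (outer `&` U) w.1).
  have Uw : U w.1 by apply: closure_subset_closed clU _ _ clw => x [].
  have rigid A : C A -> W0 (w.1, A).
    move=> CA; have Ww' : W0 (w.1, w.2) by rewrite -surjective_pairing.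
    apply: W0_constant_fst Ww' _ CA => A' CA'.
    apply: (closure_outer_sub CA'); apply: closureS clw; exact: subIsetl.
  have w1y : w.1 <> y.
    move=> w1y; apply: nP'w; rewrite [w]surjective_pairing w1y.
    by apply: yP'; case: Zw.
  have clR : closure (rigid_except y) w.1 by apply: subset_closure; split.
  by exfalso; exact: nU clR Uw.
have ncl_near : nbhs w.1 (~` closure (outer `&` U)).
  by apply: open_nbhs_nbhs; split => //; exact/closed_openC/closed_closure.
apply: filterS2 (cP'.2.2 _ Ww nP'w) (near_fst_pair ncl_near) => u nP'u nclu Zu.
case=> [P'u|[PWu Uu]]; first exact: nP'u (P'W0 P'u) P'u.
by apply: nclu; apply: subset_closure; split => //; exists u.
Qed.

End Separation.

Lemma not_closure_rigid y P' : rel_clopen W0 P' -> (forall w, P' w -> w.1 = y) ->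
  P' (y, T) -> ~ closure (rigid_except y) y.
Proof.
move=> cP' P'fst P'yT clR.
have [r [[ry Wr] P'r]] := clR _ (near_fst (cP'.1.2 _ P'yT)).
by apply: ry; exact: P'fst _ (P'r (Wr T CT)).
Qed.

Lemma isolated_bad_vertical : vertical z0.
Proof.
have [z1 [P' [W0z1 cP' P'z1 P'q]]] := isolated_qcomp hX cC W0_closed_lsc CT sT
  (fun _ => id) (ex_intro _ z0 (qcomp_refl Zz0)).
have P'W0 : P' `<=` W0 := cP'.1.1.
have [y P'y] := hd (ex_intro _ z1.1 (ex_intro2 _ _ z1 P'z1 erefl))
  (qcomp_fst_connected cP' W0z1 (fun w P'w => P'q w P'w (P'W0 _ P'w))).
have P'fst w : P' w -> w.1 = y.
  by move=> P'w; rewrite -[_ = y]/([set y] w.1) -P'y; exists w.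
have yP' A : C A -> P' (y, A).
  move=> CA; have sP' := closed_lsc_rel_clopen W0_closed_lsc cP'.
  by have [y' P'y'] := closed_lsc_full cC sP' P'z1 CA; rewrite -(P'fst _ P'y').
have Ty : hset T y := (PZ (W0P (P'W0 _ (yP' T CT)))).2.
have rigidT : closure (rigid_except y) `<=` hset T.
  by apply: closure_subset_closed (hset_closed T hX) _ => r [_ /(_ T CT)/W0P/PZ[]].
have [U [cU Uy] nU] := hereditarily_disconnected_rel_clopen hX hd (hset_compact T) Ty
  (@closed_closure _ _) rigidT (not_closure_rigid cP' P'fst (yP' T CT)).
have cQ : rel_clopen Z (extend_by_outer P' U).
  split; first exact: extend_by_outer_rel_open cP' P'fst cU Uy.
  exact: extend_by_outer_rel_closed cP' yP' cU nU.
have W0y w : W0 w -> w.1 = y.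
  move=> W0w; have z1w := qcomp_trans (qcomp_sym Zz0 W0z1) W0w.
  by case: (qcomp_sub cQ (or_introl P'z1) z1w) => [/P'fst|[[_ /(_ W0w)]]].
by move=> w W0w; rewrite (W0y _ W0w) (W0y _ (qcomp_refl Zz0)).
Qed.

End IsolatedBad.

Lemma no_bad_point : ~ (bad !=set0).
Proof.
move=> exbad; have [z0 [P [bz0 cP Pz0 Pbad]]] :=
  isolated_qcomp hX cC sZ CT sT (fun z => @proj1 _ _) exbad.
exact: bz0.2 (isolated_bad_vertical bz0 cP Pz0 Pbad).
Qed.

End NoBadPoint.

Unset Implicit Arguments.

Theorem theorem5p9 (X : topologicalType) (hX : hausdorff_space X)
  (hd : hereditarily_disconnected X) (C : set (hyperspace X)) :
  connected C ->
  (exists T : hyperspace X, C T /\ scattered (proj1_sig T)) ->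
  exists A : hyperspace X, C = [set A].
Proof.
move=> cC [T [CT sT]]; exists T.
have vertical_all z : incidence C z -> vertical C z.
  by move=> Zz; apply: contrapT => nvz; apply: (no_bad_point hX hd cC CT sT); exists z.
have hset_sub A B : C A -> C B -> hset A `<=` hset B.
  move=> CA CB y Ay; have Zy : incidence C (y, A) by [].
  have [y' qy'] := qcomp_full cC (incidence_closed_lsc C) Zy CB.
  have /= <- := vertical_all _ Zy _ qy'.
  by have [] := qy'.1.
apply/seteqP; split => [A CA|_ ->//]; apply: hset_inj.
by apply/seteqP; split; exact: hset_sub.
Qed.
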